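(* The sub-set-operad $\mathrm{RWS}_\odot$ of $\mathrm{RWS}$ generated by $A_\succ$, $A_\prec$ and $A_\odot$ consists exactly of the recursively labelled red and white trees in which every node has at most one label and which avoid the two patterns: (i) no node with a nonempty label set has a red child; (ii) no white node has two (or more) red children.
   Context: Red and white trees: $\mathrm{RW}(n)$ is the set of finite rooted trees (children unordered) whose nodes $z$ carry possibly empty label sets $L(z)\subseteq[n]$ partitioning $[n]$, each empty node having at least two children; labelled nodes are white, an empty node is red iff all its children are white (so an empty white node has a red child). Composition $T_1\circ_xT_2$ ($T_1\in\mathrm{RW}(m)$, $T_2\in\mathrm{RW}(n)$): relabel $T_1$ by $y\mapsto y+n-1$ for $y>x$ and $T_2$ by $y\mapsto y+x-1$; $z\ni x$ in $T_1$, $r$ = root of $T_2$. (W) $r$ not red: remove $x$ from $L(z)$, add $L(r)$ to $L(z)$, children of $r$ become children of $z$. (R1) $r$ red, $T_1$ the single node $\{x\}$: result $T_2$. (R2) $r$ red and ($z$ has a child or $|L(z)|\ge2$): remove $x$ from $L(z)$, attach $T_2$ as child subtree of $z$. (R3) $r$ red, $z$ non-root leaf with $L(z)=\{x\}$: delete $z$, children of $r$ become children of the parent of $z$. Colours recomputed. A tree is recursively labelled if for each node the union of label sets in its subtree is an interval of integers. $\mathrm{RWS}$ is the sub-set-operad generated by $A_\mu$ (single node $\{1,2\}$), $A_\prec$ (root $\{1\}$ with child $\{2\}$), $A_\succ$ (root $\{2\}$ with child $\{1\}$), $A_\odot$ (empty red root with children $\{1\},\{2\}$). *)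

From mathcomp Require Import all_boot.
Require Stdlib.Lists.List.
Set Implicit Arguments. Unset Strict Implicit. Unset Printing Implicit Defensive.

(* A rooted tree whose nodes carry a label list (read as a set) and a list of
   children (read as a multiset: children are unordered, see [tequiv]). *)
Inductive rwtree := RWNode of seq nat & seq rwtree.

Definition rlabels (t : rwtree) : seq nat := let: RWNode L _ := t in L.
Definition rchildren (t : rwtree) : seq rwtree := let: RWNode _ cs := t in cs.

Fixpoint tlabels (t : rwtree) : seq nat :=
  match t with RWNode L cs => L ++ flatten (map tlabels cs) end.

Fixpoint subtrees (t : rwtree) : seq rwtree :=
  match t with RWNode L cs => t :: flatten (map subtrees cs) end.

Fixpoint red (t : rwtree) : bool :=
  match t with RWNode L cs => nilp L && all (fun c => ~~ red c) cs end.
Definition white (t : rwtree) : bool := ~~ red t.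

Definition RW (n : nat) (t : rwtree) : Prop :=
  perm_eq (tlabels t) (iota 1 n) /\
  (forall u, List.In u (subtrees t) -> nilp (rlabels u) -> 2 <= size (rchildren u)).

Inductive tequiv : rwtree -> rwtree -> Prop :=
| tq_refl t : tequiv t t
| tq_sym s t : tequiv s t -> tequiv t s
| tq_trans s t u : tequiv s t -> tequiv t u -> tequiv s u
| tq_labels L1 L2 cs : perm_eq L1 L2 -> tequiv (RWNode L1 cs) (RWNode L2 cs)
| tq_swap L cs1 c c' cs2 :
    tequiv (RWNode L (cs1 ++ c :: c' :: cs2)) (RWNode L (cs1 ++ c' :: c :: cs2))
| tq_cong L cs1 c c' cs2 : tequiv c c' ->
    tequiv (RWNode L (cs1 ++ c :: cs2)) (RWNode L (cs1 ++ c' :: cs2)).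

Fixpoint relabel (f : nat -> nat) (t : rwtree) : rwtree :=
  match t with RWNode L cs => RWNode (map f L) (map (relabel f) cs) end.

Definition shift1 (x n y : nat) : nat := if x < y then y + n - 1 else y.
Definition shift2 (x y : nat) : nat := y + x - 1.

(* Cases (W) and (R2) at the node z = RWNode L cs containing x,
   T2 being the (relabelled) second argument with root r. *)
Definition node_op (x : nat) (T2 : rwtree) (L : seq nat) (cs : seq rwtree) : rwtree :=
  if ~~ red T2 then RWNode (rem x L ++ rlabels T2) (cs ++ rchildren T2)
  else RWNode (rem x L) (rcons cs T2).

(* grafting at a non-root position; returns the list of trees replacing the
   subtree in its parent's list of children (needed for (R3)). *)
Fixpoint graft (x : nat) (T2 : rwtree) (t : rwtree) : seq rwtree :=
  match t with
  | RWNode L cs =>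
      if x \in L then
        if red T2 && nilp cs && (L == [:: x]) then rchildren T2
        else [:: node_op x T2 L cs]
      else [:: RWNode L (flatten (map (graft x T2) cs))]
  end.

Definition rw_comp (n x : nat) (T1 T2 : rwtree) : rwtree :=
  let T1' := relabel (shift1 x n) T1 in
  let T2' := relabel (shift2 x) T2 in
  match T1' with
  | RWNode L cs =>
      if x \in L then
        if red T2' && nilp cs && (L == [:: x]) then T2'
        else node_op x T2' L cs
      else RWNode L (flatten (map (graft x T2') cs))
  end.

Definition A_unit  : rwtree := RWNode [:: 1] [::].
Definition A_mu    : rwtree := RWNode [:: 1; 2] [::].
Definition A_prec  : rwtree := RWNode [:: 1] [:: RWNode [:: 2] [::]].
Definition A_succ  : rwtree := RWNode [:: 2] [:: RWNode [:: 1] [::]].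
Definition A_odot  : rwtree := RWNode [::] [:: RWNode [:: 1] [::]; RWNode [:: 2] [::]].

(* RWS_odot(n): the sub-set-operad generated by A_succ, A_prec, A_odot
   (it contains the operad unit and is closed under all partial compositions;
   elements are trees up to [tequiv]). *)
Inductive RWS_odot : nat -> rwtree -> Prop :=
| rws_unit : RWS_odot 1 A_unit
| rws_succ : RWS_odot 2 A_succ
| rws_prec : RWS_odot 2 A_prec
| rws_odot : RWS_odot 2 A_odot
| rws_comp m n x T1 T2 : RWS_odot m T1 -> RWS_odot n T2 -> 1 <= x <= m ->
    RWS_odot (m + n - 1) (rw_comp n x T1 T2)
| rws_equiv n T T' : RWS_odot n T -> tequiv T T' -> RWS_odot n T'.

Definition is_interval (s : seq nat) : Prop := exists a b, s =i iota a b.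
Definition rec_labelled (t : rwtree) : Prop :=
  forall u, List.In u (subtrees t) -> is_interval (tlabels u).

Definition at_most_one_label (t : rwtree) : Prop :=
  forall u, List.In u (subtrees t) -> size (rlabels u) <= 1.

Definition avoids_pattern_i (t : rwtree) : Prop :=
  forall u, List.In u (subtrees t) -> ~~ nilp (rlabels u) ->
    all white (rchildren u).

Definition avoids_pattern_ii (t : rwtree) : Prop :=
  forall u, List.In u (subtrees t) -> white u -> count red (rchildren u) <= 1.

From mathcomp Require Import all_boot zify.
From Stdlib Require Sorting.Permutation.
Set Implicit Arguments. Unset Strict Implicit. Unset Printing Implicit Defensive.

(* For T1 \circ_x T2 the label list
   of every subtree of T1 is "expanded" (x becomes the block of labels of T2),
   which keeps intervals; grafting is then analysed node by node
   ([graft_result]), the three cases (W), (R2), (R3) at the node {x}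
   preserving the local constraints.

   Completeness ([wf_RWS_odot]) is by strong induction on n, according to the
   children of the root: a white child with several labels, or a red child, is
   cut out as the second argument of a composition ([decompose_white],
   [decompose_red]); otherwise all children are leaves and the tree is, up to
   reordering, a star or a fan, both generated explicitly. *)

Fixpoint rwtree_nested_ind (P : rwtree -> Prop)
    (IH : forall L cs, (forall c, List.In c cs -> P c) -> P (RWNode L cs))
    (t : rwtree) : P t :=
  match t with
  | RWNode L cs => IH L cs
      ((fix children (s : seq rwtree) : forall c, List.In c s -> P c :=
          match s with
          | [::] => fun c (hc : List.In c [::]) => False_ind _ hc
          | d :: s' => fun c hc =>
              match hc with
              | or_introl e => eq_ind d P (rwtree_nested_ind IH d) c e
              | or_intror h => children s' c h
              end
          end) cs)
  end.

(* Elementwise congruence for [map] and [count] on lists of trees, which carry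
   no decidable equality (hence the [List.In] hypotheses). *)
Lemma eq_map_In (A B : Type) (f g : A -> B) (s : seq A) :
  (forall a, List.In a s -> f a = g a) -> map f s = map g s.
Proof. by elim: s => //= a s IH H; rewrite H ?IH; auto. Qed.

Lemma eq_count_In (A : Type) (a b : pred A) (s : seq A) :
  (forall x, List.In x s -> a x = b x) -> count a s = count b s.
Proof. by elim: s => //= x s IH H; rewrite H ?IH; auto. Qed.

Lemma In_flatten_map (A B : Type) (F : A -> seq B) (s : seq A) u :
  List.In u (flatten (map F s)) <-> exists2 a, List.In a s & List.In u (F a).
Proof.
elim: s => [|a s IH] /=; first by split => //; case.
rewrite List.in_app_iff IH; split.
- by case=> [h|[b hb h]]; [exists a; auto | exists b; auto].
- by case=> b [<-|hb] h; [left | right; exists b].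
Qed.

Lemma mem_flatten_map_In (A : Type) (F : A -> seq nat) (s : seq A) a y :
  List.In a s -> y \in F a -> y \in flatten (map F s).
Proof.
elim: s => //= b s IH [->|ha] hy; rewrite mem_cat ?hy //.
by rewrite IH ?orbT.
Qed.

Definition everywhere (P : rwtree -> Prop) (t : rwtree) : Prop :=
  forall u, List.In u (subtrees t) -> P u.

Lemma everywhere_node P L cs : everywhere P (RWNode L cs) <->
  P (RWNode L cs) /\ (forall c, List.In c cs -> everywhere P c).
Proof.
rewrite /everywhere /=; split.
- move=> H; split; first by apply: H; left.
  by move=> c hc u hu; apply: H; right; apply/In_flatten_map; exists c.
- by case=> H1 H2 u [<-|/In_flatten_map [c hc hu]] //; apply: H2 hu.
Qed.

Lemma everywhere_root P t : everywhere P t -> P t.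
Proof. by case: t => L cs /everywhere_node []. Qed.

Lemma all_white_count cs : all white cs = (count red cs == 0).
Proof. by elim: cs => //= c cs ->; rewrite /white; case: (red c). Qed.

Lemma redE L cs : red (RWNode L cs) = nilp L && (count red cs == 0).
Proof. by rewrite -all_white_count. Qed.

Lemma red_relabel f t : red (relabel f t) = red t.
Proof.
elim/rwtree_nested_ind: t => L cs IH.
rewrite -[relabel f _]/(RWNode (map f L) (map (relabel f) cs)) !redE /nilp size_map.
by rewrite count_map; congr (_ && (_ == 0)); apply: eq_count_In => c /IH.
Qed.

Lemma tlabels_relabel f t : tlabels (relabel f t) = map f (tlabels t).
Proof.
elim/rwtree_nested_ind: t => L cs IH /=; rewrite map_cat map_flatten -!map_comp.
by congr (_ ++ flatten _); apply: eq_map_In => c /IH.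
Qed.

Lemma relabel_comp f g t : relabel f (relabel g t) = relabel (f \o g) t.
Proof.
elim/rwtree_nested_ind: t => L cs IH /=; rewrite -!map_comp.
by congr RWNode; apply: eq_map_In => c /IH.
Qed.

Lemma relabel_id_in f t : {in tlabels t, f =1 id} -> relabel f t = t.
Proof.
elim/rwtree_nested_ind: t => L cs IH /= H; congr RWNode.
- by rewrite -[RHS]map_id; apply/eq_in_map => y hy; apply: H; rewrite mem_cat hy.
- rewrite -[RHS]map_id; apply: eq_map_In => c hc; apply: IH => // y hy.
  by apply: H; rewrite mem_cat (mem_flatten_map_In hc hy) orbT.
Qed.

Lemma interval_eq_mem s s' : s =i s' -> is_interval s -> is_interval s'.
Proof. by move=> e [a [b h]]; exists a, b => y; rewrite -e h. Qed.

Lemma interval_perm_iota s a b : perm_eq s (iota a b) -> is_interval s.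
Proof. by move=> /perm_mem h; exists a, b. Qed.

Lemma map_translate_iota (s : seq nat) f a b a' : s =i iota a b ->
  {in s, forall y, f y + a = y + a'} -> map f s =i iota a' b.
Proof.
move=> h H z; apply/idP/idP.
- by case/mapP => y hy ->; have := H y hy; move: hy; rewrite h !mem_iota; lia.
- rewrite mem_iota => hz; have hy : z + a - a' \in s by rewrite h mem_iota; lia.
  by apply/mapP; exists (z + a - a') => //; have := H _ hy; lia.
Qed.

(* The local constraints of the theorem at a node with [nl] labels, [nc]
   children of which [nr] are red: at most one label, an empty node has at
   least two children, a labelled node has no red child, and at most one
   child is red (at a red node this holds since all its children are white). *)
Definition shape_ok (nl nc nr : nat) : Prop :=
  [/\ nl <= 1, nl = 0 -> 1 < nc, 0 < nl -> nr = 0 & nr <= 1].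

Definition node_shape (u : rwtree) : Prop :=
  shape_ok (size (rlabels u)) (size (rchildren u)) (count red (rchildren u)).

Definition node_ok (u : rwtree) : Prop := node_shape u /\ is_interval (tlabels u).

Definition wf (n : nat) (T : rwtree) : Prop :=
  perm_eq (tlabels T) (iota 1 n) /\ everywhere node_ok T.

Lemma wfE n T :
  [/\ RW n T, rec_labelled T, at_most_one_label T,
      avoids_pattern_i T & avoids_pattern_ii T] <-> wf n T.
Proof.
have nilpE (s : seq nat) : nilp s = (size s == 0) by [].
split.
- case=> [[hp h2] hr h1 hi hii]; split => // u hu; split; last exact: hr.
  have := h1 u hu; have := h2 u hu; have := hi u hu; have := hii u hu.
  case: u {hu} => L cs; rewrite /white redE /= all_white_count !nilpE.
  by move=> *; split => /=; lia.
- case=> hp hg; have hs u : List.In u (subtrees T) -> node_shape u by case/hg.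
  split.
  + by split => // u /hs []; rewrite nilpE; lia.
  + by move=> u /hg [].
  + by move=> u /hs [].
  + by move=> u /hs []; rewrite all_white_count nilpE; lia.
  + by move=> u /hs [].
Qed.

Lemma In_cat3 (A : Type) (d c : A) s1 s2 :
  List.In d (s1 ++ c :: s2) <-> d = c \/ List.In d (s1 ++ s2).
Proof. by rewrite !List.in_app_iff /=; intuition. Qed.

Definition same_wf_data (s t : rwtree) : Prop :=
  [/\ perm_eq (tlabels s) (tlabels t), red s = red t
    & everywhere node_ok s <-> everywhere node_ok t].

Lemma node_same_wf_data L L' cs cs' : perm_eq L L' ->
  perm_eq (flatten (map tlabels cs)) (flatten (map tlabels cs')) ->
  size cs = size cs' -> count red cs = count red cs' ->
  ((forall c, List.In c cs -> everywhere node_ok c) <->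
   (forall c, List.In c cs' -> everywhere node_ok c)) ->
  same_wf_data (RWNode L cs) (RWNode L' cs').
Proof.
move=> hL hl hs hr hc.
have hlab : perm_eq (tlabels (RWNode L cs)) (tlabels (RWNode L' cs')) by apply: perm_cat.
split => //; first by rewrite !redE /nilp (perm_size hL) hr.
rewrite !everywhere_node /node_ok /node_shape /= (perm_size hL) hs hr hc.
by split; case=> [[h1 h2] h3]; do !split => //; apply: interval_eq_mem h2 => y;
  rewrite (perm_mem hlab).
Qed.

Lemma tequiv_same_wf_data s t : tequiv s t -> same_wf_data s t.
Proof.
elim=> {s t}.
- by move=> t; split.
- by move=> s t _ [h1 h2 h3]; split; rewrite 1?perm_sym // h3.
- move=> s t u _ [h1 h2 h3] _ [h4 h5 h6].
  by split; [exact: perm_trans h1 h4 | rewrite h2 | rewrite h3].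
- by move=> L1 L2 cs hp; apply: node_same_wf_data.
- move=> L cs1 c c' cs2; apply: node_same_wf_data => //.
  + by rewrite !map_cat !flatten_cat perm_cat2l /= perm_catCA.
  + by rewrite !size_cat.
  + by rewrite !count_cat /=; lia.
  + by split => H d hd; apply: H; move: hd; rewrite !List.in_app_iff /=; tauto.
- move=> L cs1 c c' cs2 _ [h1 h2 h3]; apply: node_same_wf_data => //.
  + by rewrite !map_cat !flatten_cat perm_cat2l /= perm_cat2r.
  + by rewrite !size_cat.
  + by rewrite !count_cat /= h2.
  + split => H d /In_cat3 [->|hd]; [apply/h3/H | apply/H | apply/h3/H | apply/H];
      by apply/In_cat3; auto.
Qed.

Lemma wf_tequiv n s t : tequiv s t -> wf n s -> wf n t.
Proof.
move=> /tequiv_same_wf_data [h1 _ h3] [k1 k2]; split; last by apply/h3.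
by apply: perm_trans k1; rewrite perm_sym.
Qed.

Lemma tlabels_nonempty t : everywhere node_ok t -> 0 < size (tlabels t).
Proof.
elim/rwtree_nested_ind: t => L cs IH /everywhere_node [[[_ h2 _ _] _] hc].
rewrite /= size_cat; case: L h2 => [|a L] /= h2; last by lia.
case: cs IH hc h2 => [|c cs] IH hc h2 /=; first by have := h2 erefl.
by have := IH c (or_introl erefl) (hc c (or_introl erefl)); rewrite size_cat; lia.
Qed.

Lemma node_shape_relabel f u : node_shape (relabel f u) = node_shape u.
Proof.
case: u => L cs; rewrite /node_shape /= !size_map count_map.
by congr shape_ok; apply: eq_count => c /=; rewrite red_relabel.
Qed.

Lemma everywhere_node_ok_relabel f t :
  (forall s, is_interval s -> {subset s <= tlabels t} -> is_interval (map f s)) ->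
  everywhere node_ok t -> everywhere node_ok (relabel f t).
Proof.
elim/rwtree_nested_ind: t => L cs IH Hf /everywhere_node [[hshape hint] hc].
apply/everywhere_node; split.
- split; first by rewrite (node_shape_relabel f (RWNode L cs)).
  by rewrite -[RWNode _ _]/(relabel f (RWNode L cs)) tlabels_relabel; apply: Hf.
- move=> _ /List.in_map_iff [c [<- hin]]; apply: (IH c hin _ (hc c hin)) => s hs sub.
  by apply: Hf => // y /sub hy; rewrite /= mem_cat (mem_flatten_map_In hin hy) orbT.
Qed.

(* [expand x n s]: the effect of [_ \circ_x T2] (T2 of arity n) on the label
   list [s] of the first argument: x becomes the block x, ..., x + n - 1 and
   the labels above x are shifted by n - 1. *)
Definition expand_label (x n y : nat) : seq nat :=
  if y == x then iota x n else [:: shift1 x n y].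
Definition expand (x n : nat) (s : seq nat) : seq nat :=
  flatten (map (expand_label x n) s).

Lemma shift1_x x n : shift1 x n x = x.
Proof. by rewrite /shift1 ltnn. Qed.

Lemma shift1_inj x n : 0 < n -> injective (shift1 x n).
Proof. by move=> hn y1 y2; rewrite /shift1; case: ifP; case: ifP; lia. Qed.

Lemma mem_shift1 x n s : 0 < n -> (x \in map (shift1 x n) s) = (x \in s).
Proof. by move=> hn; rewrite -{1}(shift1_x x n) mem_map //; apply: shift1_inj. Qed.

Lemma expand_cat x n s t : expand x n (s ++ t) = expand x n s ++ expand x n t.
Proof. by rewrite /expand map_cat flatten_cat. Qed.

Lemma expand_notin x n s : x \notin s -> expand x n s = map (shift1 x n) s.
Proof.
elim: s => //= y s IH; rewrite inE negb_or => /andP[hy hs].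
by rewrite -cat1s expand_cat IH // /expand /= /expand_label eq_sym (negbTE hy).
Qed.

Lemma expand_x_cons x n s : x \notin s ->
  expand x n (x :: s) = iota x n ++ map (shift1 x n) s.
Proof.
move=> hx; rewrite -cat1s expand_cat [expand _ _ s]expand_notin //.
by rewrite /expand /= /expand_label eqxx cats0.
Qed.

Lemma perm_expand x n s t : perm_eq s t -> perm_eq (expand x n s) (expand x n t).
Proof. by move=> h; apply/perm_flatten/perm_map. Qed.

Lemma expand_eq_mem x n s t : s =i t -> expand x n s =i expand x n t.
Proof.
move=> e y; apply/flatten_mapP/flatten_mapP => -[z hz hy]; exists z => //.
- by rewrite -e.
- by rewrite e.
Qed.

Lemma map_shift1_below x n a k : a + k <= x.+1 ->
  map (shift1 x n) (iota a k) = iota a k.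
Proof.
move=> h; rewrite -[RHS]map_id; apply/eq_in_map => y.
by rewrite mem_iota /shift1; case: ifP; lia.
Qed.

Lemma map_shift1_above x n a k : 0 < n -> x < a ->
  map (shift1 x n) (iota a k) = iota (a + n - 1) k.
Proof.
move=> hn h; rewrite (_ : a + n - 1 = (n - 1) + a); last lia.
by rewrite iotaDl; apply/eq_in_map => y; rewrite mem_iota /shift1; case: ifP; lia.
Qed.

Lemma expand_iota x n a b : 0 < n -> a <= x < a + b ->
  expand x n (iota a b) = iota a (b + n - 1).
Proof.
move=> hn hx; set k := a + b - x.+1.
have -> : iota a b = iota a (x - a) ++ x :: iota x.+1 k.
  have e1 : x - a + (a + b - x) = b by lia.
  have e2 : a + (x - a) = x by lia.
  have e3 : a + b - x = k.+1 by rewrite /k; lia.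
  by rewrite -{1}e1 iotaD e2 e3.
rewrite expand_cat expand_x_cons ?expand_notin ?mem_iota; try lia.
rewrite map_shift1_below ?map_shift1_above //; try lia.
rewrite (_ : x.+1 + n - 1 = x + n); last lia.
rewrite -iotaD (_ : iota a (x - a) ++ iota x (n + k) = iota a (x - a + (n + k))).
  by congr iota; rewrite /k; lia.
by rewrite [RHS]iotaD (_ : a + (x - a) = x) //; lia.
Qed.

Lemma expand_interval x n s : 0 < n -> is_interval s -> is_interval (expand x n s).
Proof.
move=> hn [a [b h]]; case: (boolP (x \in s)) => hx.
  exists a, (b + n - 1) => y; rewrite (expand_eq_mem x n h) expand_iota //.
  by rewrite -mem_iota -h.
rewrite expand_notin //; exists (if x < a then a + n - 1 else a), b.
apply: (map_translate_iota h) => y; rewrite h mem_iota /shift1 => hy.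
by move: hx; rewrite h mem_iota; case: ifP; case: ifP; lia.
Qed.

(* Relabelling by [shift1 x n] a tree that does not contain x preserves the
   constraints (on labels avoiding x, [shift1 x n] is [expand x n]). *)
Lemma everywhere_node_ok_shift1 x n t : 0 < n -> x \notin tlabels t ->
  everywhere node_ok t -> everywhere node_ok (relabel (shift1 x n) t).
Proof.
move=> hn hx; apply: everywhere_node_ok_relabel => s hs sub.
by rewrite -expand_notin; [apply: expand_interval | apply: contra hx => /sub].
Qed.

Lemma shift2_iota x n : 1 <= x -> map (shift2 x) (iota 1 n) = iota x n.
Proof.
move=> hx; rewrite {2}(_ : x = (x - 1) + 1); last lia.
by rewrite iotaDl; apply: eq_map => y; rewrite /shift2; lia.
Qed.

Lemma wf_shift2 x n T2 : 1 <= x -> wf n T2 ->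
  everywhere node_ok (relabel (shift2 x) T2) /\
  perm_eq (tlabels (relabel (shift2 x) T2)) (iota x n).
Proof.
move=> hx [hp hok]; split.
- apply: everywhere_node_ok_relabel hok => s [a [b h]] _.
  by exists (a + x - 1), b; apply: (map_translate_iota h) => y _; rewrite /shift2; lia.
- by rewrite tlabels_relabel -shift2_iota //; apply: perm_map.
Qed.

Lemma rwtree_eta t : t = RWNode (rlabels t) (rchildren t).
Proof. by case: t. Qed.

Lemma graft_notin x T2 t : x \notin tlabels t -> graft x T2 t = [:: t].
Proof.
elim/rwtree_nested_ind: t => L cs IH /=; rewrite mem_cat negb_or => /andP[hL hc].
rewrite (negbTE hL); congr [:: RWNode L _]; rewrite -[RHS]flatten_seq1; congr flatten.
apply: eq_map_In => c hin; apply: IH => //.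
by apply: contra hc; apply: mem_flatten_map_In.
Qed.

Lemma graft_forest_notin x T2 ds : (forall d, List.In d ds -> x \notin tlabels d) ->
  flatten (map (graft x T2) ds) = ds.
Proof.
move=> H; rewrite -[RHS]flatten_seq1; congr flatten.
by apply: eq_map_In => d /H; apply: graft_notin.
Qed.

Definition root_graft (x : nat) (T2 t : rwtree) : rwtree :=
  match t with
  | RWNode L cs =>
      if x \in L then
        if red T2 && nilp cs && (L == [:: x]) then T2 else node_op x T2 L cs
      else RWNode L (flatten (map (graft x T2) cs))
  end.

Lemma rw_compE n x T1 T2 :
  rw_comp n x T1 T2 = root_graft x (relabel (shift2 x) T2) (relabel (shift1 x n) T1).
Proof. by []. Qed.

Lemma root_graft_single x T2 : root_graft x T2 (RWNode [:: x] [::]) = T2.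
Proof.
rewrite /= mem_seq1 !eqxx andbT /node_op; case: (red T2) => //=.
by rewrite eqxx; case: T2.
Qed.

Lemma graft_root_graft x T2 t :
  t = RWNode [:: x] [::] \/ graft x T2 t = [:: root_graft x T2 t].
Proof.
case: t => L cs /=; case: (x \in L); last by right.
by case: ifP => [/andP[/andP[_ /nilP ->] /eqP ->]|_]; [left | right].
Qed.

(* [graft_result x n t G]: the forest [G] that replaces the subtree [t] after
   grafting at x satisfies the constraints, carries the expanded labels of
   [t], contains a red tree iff [t] is red, and is nonempty. *)
Definition graft_result (x n : nat) (t : rwtree) (G : seq rwtree) : Prop :=
  [/\ forall g, List.In g G -> everywhere node_ok g,
      perm_eq (flatten (map tlabels G)) (expand x n (tlabels t)),
      count red G = red t & 0 < size G].

Lemma graft_result1 x n t g : everywhere node_ok g ->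
  perm_eq (tlabels g) (expand x n (tlabels t)) -> red g = red t ->
  graft_result x n t [:: g].
Proof.
move=> hok hp hr; split => /=; first by move=> _ [<-|[]].
- by rewrite cats0.
- by rewrite addn0 hr.
- by [].
Qed.

Lemma uniq_flatten_map_In (A : Type) (F : A -> seq nat) (s : seq A) a :
  uniq (flatten (map F s)) -> List.In a s -> uniq (F a).
Proof. by elim: s => //= b s IH; rewrite cat_uniq => /and3P[h _ hs] [<-|/IH]; auto. Qed.

Section Grafting.
Variables (x n : nat) (T2 : rwtree).
Hypotheses (n_gt0 : 0 < n) (T2_ok : everywhere node_ok T2)
  (T2_labels : perm_eq (tlabels T2) (iota x n)).

Let f := shift1 x n.

Let T2_shape : node_shape T2. Proof. by case: (everywhere_root T2_ok). Qed.

Let T2_children c : List.In c (rchildren T2) -> everywhere node_ok c.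
Proof. by move: T2_ok; rewrite [T2]rwtree_eta => /everywhere_node [_]; apply. Qed.

Let T2_root_labels :
  perm_eq (rlabels T2 ++ flatten (map tlabels (rchildren T2))) (iota x n).
Proof. by move: T2_labels; rewrite {1}[T2]rwtree_eta. Qed.

Let T2_red : red T2 = nilp (rlabels T2) && (count red (rchildren T2) == 0).
Proof. by rewrite {1}[T2]rwtree_eta redE. Qed.

Section AtX.
Variables (t : rwtree) (cs' : seq rwtree).
Hypotheses (cs'_ok : forall d, List.In d cs' -> everywhere node_ok d)
  (cs'_white : count red cs' = 0) (t_white : red t = false)
  (cs'_labels : perm_eq (iota x n ++ flatten (map tlabels cs')) (expand x n (tlabels t)))
  (t_interval : is_interval (expand x n (tlabels t))).

Let node_ok_of g : node_shape g ->
  perm_eq (tlabels g) (iota x n ++ flatten (map tlabels cs')) -> node_ok g.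
Proof.
move=> hs hp; split => //; apply: interval_eq_mem t_interval => y.
by rewrite -(perm_mem cs'_labels) (perm_mem hp).
Qed.

Lemma graft_result_W : ~~ red T2 ->
  graft_result x n t [:: RWNode (rlabels T2) (cs' ++ rchildren T2)].
Proof.
move=> hr; set g := RWNode _ _.
have hg : perm_eq (tlabels g) (iota x n ++ flatten (map tlabels cs')).
  by rewrite /= map_cat flatten_cat perm_catCA perm_catC perm_cat2r.
apply: graft_result1; last by rewrite /g redE count_cat cs'_white -T2_red (negbTE hr).
- apply/everywhere_node; split; last first.
    by move=> d; rewrite List.in_app_iff => -[/cs'_ok|/T2_children].
  apply: node_ok_of hg; move: T2_shape.
  by rewrite /node_shape /= size_cat count_cat cs'_white => -[*]; split; lia.
- exact: perm_trans hg cs'_labels.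
Qed.

Lemma graft_result_R2 : red T2 -> ~~ nilp cs' ->
  graft_result x n t [:: RWNode [::] (rcons cs' T2)].
Proof.
move=> hr hnil; set g := RWNode _ _.
have hg : perm_eq (tlabels g) (iota x n ++ flatten (map tlabels cs')).
  by rewrite /= -cats1 map_cat flatten_cat /= cats0 perm_catC perm_cat2r.
have red_g : count red (rcons cs' T2) = 1 by rewrite -cats1 count_cat cs'_white /= hr.
apply: graft_result1; last by rewrite /g redE red_g.
- apply/everywhere_node; split; last first.
    by move=> d; rewrite -cats1 List.in_app_iff => -[/cs'_ok|[<-|[]]].
  apply: node_ok_of hg; rewrite /node_shape /= size_rcons red_g.
  by move: hnil; rewrite /nilp; split; lia.
- exact: perm_trans hg cs'_labels.
Qed.

Lemma graft_result_R3 : red T2 -> cs' = [::] -> graft_result x n t (rchildren T2).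
Proof.
move=> hr hcs'.
have /andP[/nilP hL2 /eqP hch2] : nilp (rlabels T2) && (count red (rchildren T2) == 0).
  by rewrite -T2_red.
split => //.
- apply: perm_trans cs'_labels; rewrite hcs' cats0.
  by move: T2_root_labels; rewrite hL2.
- by rewrite hch2 t_white.
- by case: T2_shape => _ /(_ _) h _ _; move: h; rewrite hL2 => /(_ erefl); lia.
Qed.
End AtX.

(* Grafting at the node {x} (its children are white, pattern (i)). *)
Lemma graft_result_at_x cs : everywhere node_ok (RWNode [:: x] cs) ->
  x \notin flatten (map tlabels cs) ->
  graft_result x n (RWNode [:: x] cs) (graft x T2 (relabel f (RWNode [:: x] cs))).
Proof.
move=> /everywhere_node [[[_ _ hwhite _] hint] hcs] hx.
set cs' := map (relabel f) cs.
have hcs' d : List.In d cs' -> everywhere node_ok d.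
  case/List.in_map_iff => c [<- hc]; apply: everywhere_node_ok_shift1 (hcs c hc) => //.
  by apply: contra hx; apply: mem_flatten_map_In.
have white_cs' : count red cs' = 0.
  by rewrite count_map -(hwhite isT); apply: eq_count => c /=; rewrite red_relabel.
have hlab : perm_eq (iota x n ++ flatten (map tlabels cs'))
                    (expand x n (tlabels (RWNode [:: x] cs))).
  rewrite /= expand_x_cons // map_flatten -!map_comp perm_cat2l; apply/permP => y.
  by congr (count _ (flatten _)); apply: eq_map => c /=; rewrite tlabels_relabel.
have hexp := expand_interval x n_gt0 hint.
have rem_x : rem x [:: x] = [::] by rewrite /= eqxx.
rewrite /= /f shift1_x mem_seq1 !eqxx /= -/f -/cs' andbT /node_op rem_x.
case: (boolP (red T2)) => hr /=; last exact: graft_result_W.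
case: (boolP (nilp cs')) => hnil /=; last exact: graft_result_R2.
by move/nilP: hnil => hnil; apply graft_result_R3 with (cs' := cs').
Qed.

Lemma graft_result_above L cs : x \notin L -> everywhere node_ok (RWNode L cs) ->
  (forall c, List.In c cs -> graft_result x n c (graft x T2 (relabel f c))) ->
  graft_result x n (RWNode L cs) (graft x T2 (relabel f (RWNode L cs))).
Proof.
move=> hxL /everywhere_node [[hshape hint] _] IH.
have [hcount hsize hperm] :
  let ds := flatten (map (graft x T2 \o relabel f) cs) in
  [/\ count red ds = count red cs, size cs <= size ds &
    perm_eq (flatten (map tlabels ds)) (expand x n (flatten (map tlabels cs)))].
  elim: cs IH {hshape hint} => [|c cs IHcs] IH //=.
  have [_ hp hr hs] := IH c (or_introl erefl).
  have [h1 h2 h3] := IHcs (fun d hd => IH d (or_intror hd)).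
  rewrite count_cat size_cat map_cat flatten_cat expand_cat hr h1.
  by split; [ | lia | exact: perm_cat].
set ds := flatten _ in hcount hsize hperm.
have hlab : perm_eq (tlabels (RWNode (map f L) ds)) (expand x n (tlabels (RWNode L cs))).
  by rewrite /= expand_cat expand_notin // perm_cat2l.
rewrite /= mem_shift1 // (negbTE hxL) -map_comp -/ds; apply: graft_result1 => //.
- apply/everywhere_node; split.
  + split; last first.
      by apply: interval_eq_mem (expand_interval x n_gt0 hint) => y; rewrite (perm_mem hlab).
    by move: hshape; rewrite /node_shape /= size_map hcount => -[*]; split; lia.
  + by move=> d /In_flatten_map [c hc /=]; have [hok _ _ _] := IH c hc; apply: hok.
- by rewrite !redE /nilp size_map hcount.
Qed.

(* Grafting T2 at x anywhere in a tree whose labels are duplicate-free, by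
   induction on the tree: the node {x} is reached at most once. *)
Lemma graft_result_relabel t : everywhere node_ok t -> uniq (tlabels t) ->
  graft_result x n t (graft x T2 (relabel f t)).
Proof.
elim/rwtree_nested_ind: t => L cs IH hok hu.
case: (boolP (x \in L)) => hxL.
- have eL : L = [:: x].
    have [[hsize _ _ _] _] := everywhere_root hok.
    move: hsize hxL; rewrite /=; case: (L) => [|a [|b L']] //.
    by rewrite mem_seq1 => _ /eqP ->.
  subst L; apply: graft_result_at_x => //; by move: hu => /= /andP[].
- move/everywhere_node: (hok) => [_ hcs].
  move: (hu); rewrite /= cat_uniq => /and3P[_ _ hucs].
  apply: graft_result_above => // c hc; apply: IH => //; first exact: hcs.
  exact: uniq_flatten_map_In hucs hc.
Qed.
End Grafting.

Lemma wf_comp m n x T1 T2 : wf m T1 -> wf n T2 -> 1 <= x <= m ->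
  wf (m + n - 1) (rw_comp n x T1 T2).
Proof.
move=> [p1 ok1] wf2 hx.
have hn : 0 < n.
  by case: wf2 => p2 ok2; have := tlabels_nonempty ok2; rewrite (perm_size p2) size_iota.
have [ok2' p2'] := wf_shift2 (proj1 (andP hx)) wf2.
have hu1 : uniq (tlabels T1) by rewrite (perm_uniq p1) iota_uniq.
have [hok hp _ _] := graft_result_relabel hn ok2' p2' ok1 hu1.
rewrite rw_compE.
case: (graft_root_graft x (relabel (shift2 x) T2) (relabel (shift1 x n) T1)).
- (* T1 is the single node {x}, hence x = m = 1 and the result is T2 *)
  move=> e; have hm : m = 1.
    have := congr1 (size \o tlabels) e.
    by rewrite /= tlabels_relabel size_map (perm_size p1) size_iota.
  rewrite e root_graft_single relabel_id_in => [|y _]; last by rewrite /shift2; lia.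
  by rewrite hm (_ : 1 + n - 1 = n) //; lia.
- move=> e; rewrite e /= cats0 in hp; split; last by apply: hok; rewrite e; left.
  have <- : expand x n (iota 1 m) = iota 1 (m + n - 1) by apply: expand_iota; lia.
  by apply: perm_trans hp _; apply: perm_expand.
Qed.

Definition leaf (a : nat) : rwtree := RWNode [:: a] [::].

Lemma tlabels_leaves s : flatten (map tlabels (map leaf s)) = s.
Proof. by elim: s => //= a s ->. Qed.

Lemma everywhere_node_ok_leaf a : everywhere node_ok (leaf a).
Proof. by move=> u /= [<-|[]]; split; [split | exists a, 1 => y]. Qed.

Lemma wf_leaves n L s : shape_ok (size L) (size s) 0 -> perm_eq (L ++ s) (iota 1 n) ->
  wf n (RWNode L (map leaf s)).
Proof.
move=> hs hp.
have hlab : tlabels (RWNode L (map leaf s)) = L ++ s by rewrite /= tlabels_leaves.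
have white_leaves : count red (map leaf s) = 0 by elim: s {hs hp hlab} => //= a s ->.
rewrite /wf hlab; split => //; apply/everywhere_node; split.
- split; last by rewrite hlab; apply: interval_perm_iota hp.
  by rewrite /node_shape /= size_map white_leaves.
- by move=> _ /List.in_map_iff [a [<- _]]; apply: everywhere_node_ok_leaf.
Qed.

Lemma RWS_odot_wf n T : RWS_odot n T -> wf n T.
Proof.
elim => {n T}.
- by apply: (@wf_leaves 1 [:: 1] [::]).
- by apply: (@wf_leaves 2 [:: 2] [:: 1]).
- by apply: (@wf_leaves 2 [:: 1] [:: 2]).
- by apply: (@wf_leaves 2 [::] [:: 1; 2]).
- by move=> m n x T1 T2 _ wf1 _ wf2; apply: wf_comp.
- by move=> n T T' _ wfT e; apply: wf_tequiv e wfT.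
Qed.

Lemma Permutation_of_perm_eq (T : eqType) (s t : seq T) :
  perm_eq s t -> Permutation.Permutation s t.
Proof.
elim: s t => [|x s IH] t; first by case: t => // y t /perm_size.
move=> hp; have hx : x \in t by rewrite -(perm_mem hp) mem_head.
move: hp; case/splitPr: t / hx => t1 t2 hp.
apply: Permutation.Permutation_cons_app; apply: IH.
by rewrite -(perm_cons x) (perm_trans hp) // perm_sym -cat1s perm_catCA.
Qed.

Lemma tequiv_Permutation L pre s t : Permutation.Permutation s t ->
  tequiv (RWNode L (pre ++ s)) (RWNode L (pre ++ t)).
Proof.
move=> hp; elim: hp pre => {s t}.
- by move=> pre; apply: tq_refl.
- by move=> x s t _ IH pre; have := IH (rcons pre x); rewrite -!cats1 -!catA.
- by move=> x y s pre; apply: tq_swap.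
- by move=> s t u _ IH1 _ IH2 pre; apply: tq_trans (IH1 pre) (IH2 pre).
Qed.

Lemma tequiv_perm_leaves L s t : perm_eq s t ->
  tequiv (RWNode L (map leaf s)) (RWNode L (map leaf t)).
Proof.
move=> /Permutation_of_perm_eq /(Permutation.Permutation_map leaf) hp.
exact: (tequiv_Permutation L [::] hp).
Qed.

Lemma RWS_odot_perm_leaves n L s t : perm_eq s t ->
  RWS_odot n (RWNode L (map leaf s)) -> RWS_odot n (RWNode L (map leaf t)).
Proof. by move=> hp h; apply: rws_equiv h (tequiv_perm_leaves L hp). Qed.

Lemma relabel_leaves f s : map (relabel f) (map leaf s) = map leaf (map f s).
Proof. by rewrite -!map_comp. Qed.

Lemma In_mem (T : eqType) (x : T) s : List.In x s -> x \in s.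
Proof. by elim: s => //= y s IH [->|/IH]; rewrite inE ?eqxx // => ->; rewrite orbT. Qed.

(* [star k]: an empty root with k leaves, obtained by iterating A_odot. *)
Definition star (k : nat) : rwtree := RWNode [::] (map leaf (iota 1 k)).

Lemma RWS_odot_star k : 1 < k -> RWS_odot k (star k).
Proof.
case: k => [|[|k]] // _; elim: k => [|k IH]; first exact: rws_odot.
have := rws_comp IH rws_odot (isT : 1 <= 1 <= k.+2).
rewrite (_ : k.+2 + 2 - 1 = k.+3) ?rw_compE /star /=; last lia.
rewrite relabel_leaves graft_forest_notin ?map_shift1_above //.
move=> _ /List.in_map_iff [y [<- /In_mem]].
by rewrite /= mem_seq1 mem_iota; apply: contraTneq => <-.
Qed.

Lemma comp_root_leaves x s a b : x \notin s ->
  rw_comp 2 x (RWNode [:: x] (map leaf s)) (RWNode [:: a] [:: RWNode [:: b] [::]]) =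
  RWNode [:: shift2 x a] (map leaf (rcons (map (shift1 x 2) s) (shift2 x b))).
Proof.
move=> hx; rewrite rw_compE /= shift1_x mem_seq1 eqxx /= /node_op /= eqxx.
by rewrite relabel_leaves -cats1 map_cat.
Qed.

(* [fan i j]: the root {i + 1} with leaves for all other labels in 1 .. i + j + 1;
   obtained from the unit by composing A_prec (adding a leaf above the root
   label) and A_succ (adding a leaf below it). *)
Definition fan (i j : nat) : rwtree :=
  RWNode [:: i.+1] (map leaf (iota 1 i ++ iota i.+2 j)).

Lemma RWS_odot_fan i j : RWS_odot (i + j + 1) (fan i j).
Proof.
elim: i j => [|i IHi] j.
- elim: j => [|j IHj]; first exact: rws_unit.
  have hx : 1 <= 1 <= 0 + j + 1 by lia.
  have := rws_comp IHj rws_prec hx.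
  rewrite /fan /A_prec comp_root_leaves ?map_shift1_above //; last by rewrite mem_iota.
  rewrite (_ : 0 + j + 1 + 2 - 1 = 0 + j.+1 + 1); last lia.
  by apply: RWS_odot_perm_leaves; rewrite /shift2 /= perm_rcons.
- have hx : 1 <= i.+1 <= i + j + 1 by lia.
  have := rws_comp (IHi j) rws_succ hx.
  rewrite /fan /A_succ comp_root_leaves; last by rewrite mem_cat !mem_iota; lia.
  rewrite map_cat map_shift1_below ?map_shift1_above //; try lia.
  rewrite (_ : i + j + 1 + 2 - 1 = i.+1 + j + 1); last lia.
  apply: RWS_odot_perm_leaves; rewrite /shift2 (_ : i.+2 + 2 - 1 = i.+3); last lia.
  have -> : iota 1 i.+1 = rcons (iota 1 i) i.+1.
    by rewrite -[in LHS](addn1 i) iotaD add1n cats1.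
  by rewrite perm_rcons -cats1 -catA -cat1s perm_catCA; apply: perm_refl.
Qed.

(* A node whose children are all leaves is a star or a fan, up to reordering. *)
Lemma RWS_odot_leaves n L s :
  wf n (RWNode L (map leaf s)) -> RWS_odot n (RWNode L (map leaf s)).
Proof.
move=> [hp /everywhere_root [[h1 h2 _ _] _]].
rewrite /= tlabels_leaves in hp; rewrite /= size_map in h1 h2.
case: L h1 h2 hp => [|a [|a' L]] //= _ h2 hp.
- have hn : 1 < n by have := h2 erefl; rewrite (perm_size hp) size_iota.
  by apply: RWS_odot_perm_leaves (RWS_odot_star hn); rewrite perm_sym.
- have : a \in iota 1 n by rewrite -(perm_mem hp) mem_head.
  rewrite mem_iota; case: a hp => [|i] hp ha; first lia.
  set j := n - i.+1; have hn : n = i + j + 1 by rewrite /j; lia.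
  have e : iota 1 n = iota 1 i ++ i.+1 :: iota i.+2 j by rewrite hn addn1 -addnS iotaD.
  rewrite hn; apply: RWS_odot_perm_leaves (RWS_odot_fan i j).
  rewrite -(perm_cons i.+1) perm_sym (perm_trans hp) // e.
  by rewrite -cat1s perm_catCA.
Qed.

(* Removing a block [p, p + m) of labels, then relabelling the other labels
   (and p, which stands for the removed block) to close the gap. *)
Definition collapse (p m y : nat) : nat := if p < y then y - (m - 1) else y.
Definition lower (p y : nat) : nat := y - (p - 1).

Lemma collapse_labels (R C : seq nat) n p m : uniq (R ++ C) -> R ++ C =i iota 1 n ->
  C =i iota p m -> 0 < m ->
  [/\ 1 <= p, p + m <= n + 1, {in R, forall y, y < p \/ p + m <= y}
    & perm_eq (map (collapse p m) (p :: R)) (iota 1 (n - m + 1))].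
Proof.
move=> hu hRC hC hm.
have disj : {in C, forall y, y \notin R}.
  by move: hu; rewrite cat_uniq => /and3P[_ /hasPn h _].
have memR y : (y \in R) = (1 <= y < 1 + n) && ~~ (p <= y < p + m).
  rewrite -!mem_iota -hRC -hC mem_cat; case hy: (y \in R) => /=; last by rewrite andbN.
  by case hc: (y \in C) => //; move: (disj y hc); rewrite hy.
have : p \in iota 1 n by rewrite -hRC mem_cat hC mem_iota; lia.
have : p + m - 1 \in iota 1 n by rewrite -hRC mem_cat hC mem_iota; lia.
rewrite !mem_iota => hpm hp.
have hR : {in R, forall y, y < p \/ p + m <= y} by move=> y; rewrite memR; lia.
split => //; try lia.
apply: uniq_perm; rewrite ?iota_uniq //.
- rewrite map_inj_in_uniq.
  + by rewrite /= memR; move: hu; rewrite cat_uniq => /andP[-> _]; rewrite andbT; lia.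
  + move=> y1 y2; rewrite !inE !memR /collapse.
    by case/orP => [/eqP ->|h1]; case/orP => [/eqP ->|h2] //; case: ifP; case: ifP; lia.
- move=> z; rewrite mem_iota; apply/mapP/idP.
  + case=> y; rewrite inE => /orP[/eqP ->|]; rewrite /collapse.
      by rewrite ltnn => ->; lia.
    by rewrite memR => hy ->; case: ifP; lia.
  + move=> hz; case: (ltngtP z p) => hzp.
    * by exists z; rewrite ?inE ?memR /collapse; [apply/orP; right | case: ifP]; lia.
    * exists (z + m - 1); rewrite ?inE ?memR /collapse.
        by apply/orP; right; lia.
      by case: ifP; lia.
    * by exists p; rewrite ?inE ?eqxx // /collapse ltnn.
Qed.

Lemma everywhere_node_ok_collapse p m (R : seq nat) d : 0 < m ->
  {in R, forall y, y < p \/ p + m <= y} ->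
  {subset tlabels d <= R} -> everywhere node_ok d ->
  everywhere node_ok (relabel (collapse p m) d).
Proof.
move=> hm hR hsub; apply: everywhere_node_ok_relabel => s [a [b h]] ssub.
exists (if a < p then a else a - (m - 1)), b; apply: (map_translate_iota h) => y hy.
have ha : a \in s by move: hy; rewrite !h !mem_iota; lia.
have hpa : ~~ (a <= p < a + b) by rewrite -mem_iota -h; apply/negP => /ssub/hsub/hR; lia.
move: (hR _ (hsub _ (ssub _ hy))) (hR _ (hsub _ (ssub _ ha))) hpa.
by move: hy; rewrite h mem_iota /collapse; case: ifP; case: ifP; lia.
Qed.

Lemma wf_lower c p m : 1 <= p -> tlabels c =i iota p m -> uniq (tlabels c) ->
  everywhere node_ok c -> wf m (relabel (lower p) c).
Proof.
move=> hp hC hu hok; split.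
- have -> : iota 1 m = map (lower p) (iota p m).
    rewrite {2}(_ : p = (p - 1) + 1); last lia.
    by rewrite iotaDl -map_comp -[LHS]map_id; apply: eq_map => y /=; rewrite /lower; lia.
  by rewrite tlabels_relabel; apply/perm_map/uniq_perm; rewrite ?iota_uniq.
- apply: everywhere_node_ok_relabel hok => s [a [b h]] ssub.
  exists (a - (p - 1)), b; apply: (map_translate_iota h) => y hy.
  have ha : a \in s by move: hy; rewrite !h !mem_iota; lia.
  move: (ssub _ hy) (ssub _ ha); rewrite !hC !mem_iota /lower.
  by move: hy; rewrite h mem_iota; lia.
Qed.

Lemma wf_collapse N p m (R : seq nat) T0 : 0 < m -> {in R, forall y, y < p \/ p + m <= y} ->
  perm_eq (map (collapse p m) (p :: R)) (iota 1 N) ->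
  perm_eq (tlabels T0) (p :: R) -> node_shape T0 ->
  (forall d, List.In d (rchildren T0) ->
     d = leaf p \/ everywhere node_ok d /\ {subset tlabels d <= R}) ->
  wf N (relabel (collapse p m) T0).
Proof.
move=> hm hR hcol hlab hshape hcs.
have hlab' : perm_eq (tlabels (relabel (collapse p m) T0)) (iota 1 N).
  by rewrite tlabels_relabel; apply: perm_trans hcol; apply: perm_map.
split => //; move: hlab'; case: T0 hlab hshape hcs => L0 ds _ hshape hcs hlab'.
apply/everywhere_node; split.
- split; first by rewrite (node_shape_relabel (collapse p m) (RWNode L0 ds)).
  exact: interval_perm_iota hlab'.
- move=> _ /List.in_map_iff [d [<- hd]]; case: (hcs d hd) => [->|[hok hsub]].
  + by rewrite /= /collapse ltnn; apply: everywhere_node_ok_leaf.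
  + exact: everywhere_node_ok_collapse hm hR hsub hok.
Qed.

Lemma rw_comp_collapse_lower m p T0 c : 0 < m -> 1 <= p ->
  {in tlabels T0, forall y, y = p \/ y < p \/ p + m <= y} -> tlabels c =i iota p m ->
  rw_comp m p (relabel (collapse p m) T0) (relabel (lower p) c) = root_graft p c T0.
Proof.
move=> hm hp h0 hc; rewrite rw_compE.
have -> : relabel (shift1 p m) (relabel (collapse p m) T0) = T0.
  rewrite relabel_comp relabel_id_in // => y /h0 /=.
  by rewrite /shift1 /collapse; case: ifP; case: ifP; lia.
have -> : relabel (shift2 p) (relabel (lower p) c) = c.
  by rewrite relabel_comp relabel_id_in // => y; rewrite hc mem_iota /= /shift2 /lower; lia.
by [].
Qed.

Definition other_labels (L : seq nat) (cs1 cs2 : seq rwtree) : seq nat :=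
  L ++ flatten (map tlabels (cs1 ++ cs2)).

Lemma perm_labels_child L cs1 c cs2 :
  perm_eq (tlabels (RWNode L (cs1 ++ c :: cs2))) (other_labels L cs1 cs2 ++ tlabels c).
Proof.
by apply/permP => q; rewrite /other_labels /= !map_cat !flatten_cat /= !count_cat; lia.
Qed.

Lemma everywhere_node_ok_children n L cs1 c cs2 : wf n (RWNode L (cs1 ++ c :: cs2)) ->
  everywhere node_ok c /\ forall d, List.In d (cs1 ++ cs2) -> everywhere node_ok d.
Proof.
by case=> _ /everywhere_node [_ hcs]; split => [|d hd]; apply: hcs; apply/In_cat3; auto.
Qed.

Lemma split_child n L cs1 c cs2 : wf n (RWNode L (cs1 ++ c :: cs2)) ->
  let R := other_labels L cs1 cs2 in
  exists p m,
    [/\ tlabels c =i iota p m, uniq (tlabels c), size (tlabels c) = m, size R + m = n &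
    [/\ 1 <= p, p + m <= n + 1, {in R, forall y, y < p \/ p + m <= y}
      & perm_eq (map (collapse p m) (p :: R)) (iota 1 (n - m + 1))]].
Proof.
move=> hwf R; have [hp _] := hwf; have [hc _] := everywhere_node_ok_children hwf.
have hperm := perm_labels_child L cs1 c cs2; rewrite -/R in hperm.
have hu : uniq (R ++ tlabels c) by rewrite -(perm_uniq hperm) (perm_uniq hp) iota_uniq.
have hRC : R ++ tlabels c =i iota 1 n by move=> y; rewrite -(perm_mem hperm) (perm_mem hp).
have [_ [p [m hC]]] := everywhere_root hc.
have huc : uniq (tlabels c) by move: hu; rewrite cat_uniq => /and3P[].
have hsz : size (tlabels c) = m.
  by rewrite (perm_size (uniq_perm huc (iota_uniq p m) hC)) size_iota.
have hm : 0 < m by rewrite -hsz; apply: tlabels_nonempty.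
have [h1 h2 hR hcol] := collapse_labels hu hRC hC hm.
exists p, m; split => //.
by have := perm_size hperm; rewrite (perm_size hp) size_iota size_cat hsz.
Qed.

Lemma other_labels_nonempty n L cs1 c cs2 : wf n (RWNode L (cs1 ++ c :: cs2)) ->
  0 < size (other_labels L cs1 cs2).
Proof.
move=> hwf; have [_ hcs] := everywhere_node_ok_children hwf.
have [_ /everywhere_root [[_ h2 _ _] _]] := hwf; rewrite /= in h2.
rewrite /other_labels; case: L h2 {hwf} => [|a L] h2 //=.
have : 0 < size (cs1 ++ cs2) by have := h2 erefl; rewrite !size_cat /=; lia.
case E: (cs1 ++ cs2) => [|d ds] // _.
have hd : List.In d (cs1 ++ cs2) by rewrite E; left.
have := tlabels_nonempty (hcs d hd).
by rewrite /= size_cat; lia.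
Qed.

(* A red node has at least two children, hence at least two labels. *)
Lemma red_labels c : everywhere node_ok c -> red c -> 1 < size (tlabels c).
Proof.
case: c => L cs /everywhere_node [[[_ h2 _ _] _] hcs]; rewrite redE => /andP[/nilP hL _].
have : 1 < size cs by apply: h2; rewrite /= hL.
rewrite /= hL /=; case: cs hcs {h2} => [|d [|d' cs]] //= hcs _.
have := tlabels_nonempty (hcs d (or_introl erefl)).
have := tlabels_nonempty (hcs d' (or_intror (or_introl erefl))).
by rewrite !size_cat; lia.
Qed.

Definition decomposable (n : nat) (T : rwtree) : Prop :=
  exists m p T1 T2, [/\ wf (n - m + 1) T1, wf m T2, 1 <= p <= n - m + 1, 1 < m < n
                      & tequiv (rw_comp m p T1 T2) T].

Lemma graft_leaf_white x T2 : ~~ red T2 -> graft x T2 (leaf x) = [:: T2].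
Proof.
by move=> hw; rewrite /= mem_seq1 eqxx (negbTE hw) /node_op hw /= eqxx; case: T2 hw.
Qed.

(* A white child with at least two labels is cut out, leaving a leaf in its
   place, to which it is grafted back by case (W). *)
Lemma decompose_white n L cs1 c cs2 : wf n (RWNode L (cs1 ++ c :: cs2)) ->
  ~~ red c -> 1 < size (tlabels c) -> decomposable n (RWNode L (cs1 ++ c :: cs2)).
Proof.
move=> hwf hw hc2; have hR0 := other_labels_nonempty hwf.
have [p [m [hC hu hsz hsize [hp1 hpm hR hcol]]]] := split_child hwf.
set R := other_labels L cs1 cs2 in hR0 hsize hR hcol.
have [hc hcs] := everywhere_node_ok_children hwf.
have hpR : p \notin R by apply/negP => /hR; lia.
have hsubR d : List.In d (cs1 ++ cs2) -> {subset tlabels d <= R}.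
  by move=> hd y hy; rewrite /R /other_labels mem_cat (mem_flatten_map_In hd hy) orbT.
set T0 := RWNode L (cs1 ++ leaf p :: cs2).
have hT0 : perm_eq (tlabels T0) (p :: R).
  by apply: perm_trans (perm_labels_child L cs1 (leaf p) cs2) _; rewrite /= perm_catC.
exists m, p, (relabel (collapse p m) T0), (relabel (lower p) c); split; try lia.
- apply: wf_collapse hR hcol hT0 _ _; first lia.
  + have [_ /everywhere_root [hshape _]] := hwf.
    by move: hshape; rewrite /node_shape /= !size_cat !count_cat /= (negbTE hw).
  + move=> d /In_cat3 [->|hd]; [by left | right].
    by split; [apply: hcs | apply: hsubR].
- exact: wf_lower.
- rewrite rw_comp_collapse_lower //; try lia; last first.
    by move=> y; rewrite (perm_mem hT0) inE => /orP[/eqP->|/hR]; auto.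
  have hpL : p \notin L by apply: contra hpR; rewrite /R /other_labels mem_cat => ->.
  have hpd d : List.In d (cs1 ++ cs2) -> p \notin tlabels d.
    by move=> hd; apply: contra hpR; apply: hsubR.
  rewrite /root_graft /T0 (negbTE hpL) map_cat flatten_cat map_cons graft_leaf_white //=.
  rewrite !graft_forest_notin; first exact: tq_refl.
  all: by move=> d hd; apply: hpd; rewrite List.in_app_iff; auto.
Qed.

(* A red child forces an empty root (pattern (i)); it is cut out, the root
   taking its label p, and grafted back by case (R2). *)
Lemma decompose_red n L cs1 c cs2 : wf n (RWNode L (cs1 ++ c :: cs2)) -> red c ->
  decomposable n (RWNode L (cs1 ++ c :: cs2)).
Proof.
move=> hwf hr; have hR0 := other_labels_nonempty hwf.
have [p [m [hC hu hsz hsize [hp1 hpm hR hcol]]]] := split_child hwf.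
set R := other_labels L cs1 cs2 in hR0 hsize hR hcol.
have [hc hcs] := everywhere_node_ok_children hwf.
have hm : 1 < m by rewrite -hsz; apply: red_labels.
have [_ /everywhere_root [[_ h2 h3 h4] _]] := hwf.
rewrite /= !size_cat !count_cat /= hr in h2 h3 h4.
have hL : L = [::] by apply/nilP; rewrite /nilp; apply/eqP; lia.
have white_rest : count red cs1 + count red cs2 = 0 by lia.
subst L; set T0 := RWNode [:: p] (cs1 ++ cs2).
exists m, p, (relabel (collapse p m) T0), (relabel (lower p) c); split; try lia.
- apply: wf_collapse hR hcol _ _ _; rewrite ?perm_refl //; first lia.
  + by rewrite /node_shape /= count_cat white_rest; split.
  + move=> d hd; right; split; first exact: hcs.
    by move=> y hy; rewrite /R /other_labels /= (mem_flatten_map_In hd hy).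
- exact: wf_lower.
- rewrite rw_comp_collapse_lower //; try lia; last first.
    by move=> y; rewrite inE => /orP[/eqP->|/hR]; auto.
  have hne : nilp (cs1 ++ cs2) = false by rewrite /nilp size_cat; apply/eqP; lia.
  rewrite /root_graft /T0 mem_seq1 !eqxx hr hne /node_op hr /= eqxx -cats1 -catA.
  apply: tequiv_Permutation; apply: Permutation.Permutation_sym.
  exact: Permutation.Permutation_cons_append.
Qed.

Lemma split_has (P : pred rwtree) cs : has P cs ->
  exists cs1 c cs2, cs = cs1 ++ c :: cs2 /\ P c.
Proof.
elim: cs => //= d cs IH /orP[h|/IH [cs1 [c [cs2 [-> h]]]]].
- by exists [::], d, cs.
- by exists (d :: cs1), c, cs2.
Qed.

Lemma leaf_of c : everywhere node_ok c -> size (tlabels c) <= 1 ->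
  c = leaf (head 0 (tlabels c)).
Proof.
case: c => L [|d cs] /everywhere_node [[[h1 h2 _ _] _] hcs] /=; rewrite /= in h1 h2.
- by case: L h1 h2 => [|a [|b L]] //= _ /(_ erefl).
- have := tlabels_nonempty (hcs d (or_introl erefl)); rewrite !size_cat.
  case: L h1 h2 => [|a L] /= h1 h2; last lia.
  case: cs hcs h2 => [|d' cs] hcs /(_ erefl) //= _.
  by have := tlabels_nonempty (hcs d' (or_intror (or_introl erefl))); rewrite size_cat; lia.
Qed.

Lemma wf_RWS_odot n T : wf n T -> RWS_odot n T.
Proof.
elim/ltn_ind: n T => n IH [L cs] hwf.
have by_decomposition : decomposable n (RWNode L cs) -> RWS_odot n (RWNode L cs).
  move=> [m [p [T1 [T2 [w1 w2 hp hm e]]]]].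
  have r1 : RWS_odot (n - m + 1) T1 by apply: IH w1; lia.
  have r2 : RWS_odot m T2 by apply: IH w2; lia.
  have := rws_comp r1 r2 hp; rewrite (_ : n - m + 1 + m - 1 = n); last lia.
  by move=> h; apply: rws_equiv h e.
case hA: (has (fun c => ~~ red c && (1 < size (tlabels c))) cs).
  have [cs1 [c [cs2 [ecs /andP[hw h2]]]]] := split_has hA; subst cs.
  exact/by_decomposition/decompose_white.
case hB: (has red cs).
  have [cs1 [c [cs2 [ecs hr]]]] := split_has hB; subst cs.
  exact/by_decomposition/decompose_red.
(* otherwise all children are white with at most one label, i.e. leaves *)
have hleaf c : List.In c cs -> c = leaf (head 0 (tlabels c)).
  move=> hc; have [_ /everywhere_node [_ hcs]] := hwf; apply: leaf_of (hcs c hc) _.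
  have hasF (P : pred rwtree) : has P cs = false -> P c = false.
    by elim: (cs) hc => //= d ds IHds [<-|/IHds]; case: (P d).
  by move: (hasF _ hA) (hasF _ hB) => /= hA' hB'; move: hA'; rewrite hB' /=; lia.
have ecs : cs = map leaf (map (fun c => head 0 (tlabels c)) cs).
  by rewrite -map_comp -[LHS]map_id; apply: eq_map_In => c /hleaf.
by rewrite ecs in hwf *; apply: RWS_odot_leaves.
Qed.

Theorem mainTheorem12 (n : nat) (T : rwtree) :
  RWS_odot n T <->
  [/\ RW n T, rec_labelled T, at_most_one_label T,
      avoids_pattern_i T & avoids_pattern_ii T].
Proof. by rewrite wfE; split; [apply: RWS_odot_wf | apply: wf_RWS_odot]. Qed.
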